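(* Let $k$ be an algebraically closed field of characteristic zero and let $(A,M)$ be a standard graded $k$-algebra, $A=A_0\oplus A_1\oplus\cdots$. If $A$ is not a principal ideal algebra, then the set $$\mathcal{E}=\{\,i\in\mathbb{N}\;:\;\text{there exist } N\ge 0 \text{ and a }k\text{-algebra homomorphism }\alpha:A\to k[t]/\langle t^{N+1}\rangle \text{ with } \dim_k\alpha(A_i)\ge 2\,\}$$ is finite and nonempty.
   Context: All algebras are commutative, unital and finite dimensional over $k$. A principal ideal algebra is a finite dimensional commutative $k$-algebra in which every ideal is principal. A finite dimensional non-negatively graded algebra $A=A_0\oplus A_1\oplus\cdots\oplus A_n$ is standard if $M=A_1\oplus\cdots\oplus A_n$ is a maximal ideal generated by elements of degree one. A truncated polynomial algebra is one of the form $k[t]/\langle t^{N+1}\rangle$. *)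

From HB Require Import structures.
From mathcomp Require Import all_boot all_order all_algebra all_field.
Set Implicit Arguments. Unset Strict Implicit. Unset Printing Implicit Defensive.
Import GRing.Theory.
Local Open Scope ring_scope.

(* Ideals of a finite-dimensional k-algebra A: k-subspaces closed under
   multiplication by arbitrary elements of A (every ideal of a k-algebra is
   automatically a k-subspace). *)
Definition is_ideal (k : fieldType) (A : falgType k) (I : {vspace A}) : Prop :=
  forall a x : A, x \in I -> a * x \in I.

Definition principal_ideal (k : fieldType) (A : falgType k) (I : {vspace A}) : Prop :=
  exists g : A, forall x : A, x \in I <-> exists a : A, x = a * g.

Definition principal_ideal_algebra (k : fieldType) (A : falgType k) : Prop :=
  forall I : {vspace A}, is_ideal I -> principal_ideal I.

Definition maximal_ideal (k : fieldType) (A : falgType k) (M : {vspace A}) : Prop :=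
  [/\ is_ideal M, M != fullv &
      forall I : {vspace A}, is_ideal I -> (M <= I)%VS -> I = M \/ I = fullv].

Definition graded_algebra (k : fieldType) (A : falgType k) (n : nat)
    (Ai : nat -> {vspace A}) : Prop :=
  [/\ (\sum_(i < n.+1) Ai i)%VS = fullv,
      directv (\sum_(i < n.+1) Ai i)%VS,
      forall i, (n < i)%N -> Ai i = 0%VS,
      (1 : A) \in Ai 0%N &
      forall i j (x y : A), x \in Ai i -> y \in Ai j -> x * y \in Ai (i + j)%N].

Definition irrelevant_ideal (k : fieldType) (A : falgType k) (n : nat)
    (Ai : nat -> {vspace A}) : {vspace A} :=
  (\sum_(1 <= i < n.+1) Ai i)%VS.

Definition standard_graded (k : fieldType) (A : falgType k) (n : nat)
    (Ai : nat -> {vspace A}) : Prop :=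
  [/\ graded_algebra n Ai,
      maximal_ideal (irrelevant_ideal n Ai) &
      irrelevant_ideal n Ai = (fullv * Ai 1%N)%VS].

(* The truncated polynomial algebra k[t]/<t^(N+1)> is represented on
   'rV[k]_(N.+1), the coordinates in the basis 1, t, ..., t^N. *)
Definition trunc_poly (k : fieldType) (N : nat) (u : 'rV[k]_N.+1) : {poly k} :=
  \poly_(i < N.+1) u 0 (inord i).

Definition trunc_mul (k : fieldType) (N : nat) (u v : 'rV[k]_N.+1) : 'rV[k]_N.+1 :=
  \row_(i < N.+1) (trunc_poly u * trunc_poly v)`_i.

Definition trunc_one (k : fieldType) (N : nat) : 'rV[k]_N.+1 :=
  \row_(i < N.+1) (i == 0%N :> nat)%:R.

(* k-algebra homomorphism A -> k[t]/<t^(N+1)> (k-linearity is built into 'Hom) *)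
Definition trunc_alg_hom (k : fieldType) (A : falgType k) (N : nat)
    (alpha : 'Hom(A, 'rV[k]_N.+1)) : Prop :=
  alpha 1 = trunc_one k N /\
  forall x y : A, alpha (x * y) = trunc_mul (alpha x) (alpha y).

Definition E_set (k : fieldType) (A : falgType k) (Ai : nat -> {vspace A})
    (i : nat) : Prop :=
  exists (N : nat) (alpha : 'Hom(A, 'rV[k]_N.+1)),
    trunc_alg_hom alpha /\ (2 <= \dim (alpha @: Ai i)%VS)%N.

(* Over the algebraically closed field k the algebra A is local with residue
   field k: every a is congruent modulo M to a unique scalar chi(a), and chi is
   a character.  The projection D of A onto A_1 along k (+) A_{>=2} is a
   chi-derivation, because a product of two elements of M lies in A_{>=2}.  If
   dim A_1 >= 2, two coordinates D_1, D_2 of D give the homomorphism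
   a |-> chi(a) + D_1(a) t^2 + D_2(a) t^3 into k[t]/(t^4), which maps A_1 onto
   a plane, so 1 is in E.  If dim A_1 <= 1, then M = A x and every ideal is
   generated by the least power of x it contains, so A is a principal ideal
   algebra.  Finally E lies in {0, ..., n} since A_i = 0 for i > n. *)

From HB Require Import structures.
From mathcomp Require Import all_boot all_order all_algebra all_field.
Set Implicit Arguments. Unset Strict Implicit. Unset Printing Implicit Defensive.
Import GRing.Theory.
Local Open Scope ring_scope.

Section LeftInverses.
Variables (k : fieldType) (A : falgType k).
Implicit Types (M : {vspace A}) (a b m : A).

Lemma linv_1_sub_nilpotent m N : m ^+ N = 0 -> exists d, d * (1 - m) = 1.
Proof.
move=> mN0; exists (\sum_(i < N) m ^+ i).
have cm : GRing.comm (\sum_(i < N) m ^+ i) (1 - m).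
  apply: commrB; first exact: commr1.
  by apply/commr_sym/commr_sum => i _; apply: commrX.
by rewrite cm -opprB mulNr -subrX1 mN0 sub0r opprK.
Qed.

Lemma one_notin_proper_ideal M : is_ideal M -> M != fullv -> 1 \notin M.
Proof.
move=> idM; apply: contra => M1; rewrite eqEsubv subvf /=.
by apply/subvP => a _; rewrite -[a]mulr1 idM.
Qed.

Lemma linv_notin_maximal_ideal M b :
  maximal_ideal M -> (forall m, m \in M -> exists d, d * (1 - m) = 1) ->
  b \notin M -> exists d, d * b = 1.
Proof.
move=> [idM _ maxM] linvM bM; set J := (M + amulr b @: fullv)%VS.
have idJ : is_ideal J.
  move=> a x /memv_addP[u Mu [_ /memv_imgP[c _ ->] ->]].
  rewrite mulrDr; apply: memv_add; first exact: idM.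
  have -> : a * amulr b c = amulr b (a * c) by rewrite !lfunE /= mulrA.
  by rewrite memv_img ?memvf.
have Jb : b \in J.
  have -> : b = amulr b 1 by rewrite lfunE /= mul1r.
  by rewrite (subvP (addvSr _ _)) ?memv_img ?memvf.
case: (maxM J idJ (addvSl _ _)) => [JM | Jfull]; first by rewrite -JM Jb in bM.
have /memv_addP[u Mu [_ /memv_imgP[c _ ->] Eu]] : 1 \in J by rewrite Jfull memvf.
have [d du] := linvM u Mu.
by exists (d * c); rewrite -mulrA -du Eu lfunE /= addrC addKr.
Qed.

End LeftInverses.

Section GradedAlgebra.
Variables (k : fieldType) (A : falgType k) (n : nat) (Ai : nat -> {vspace A}).

Definition graded_tail j := (\sum_(i < n.+1 | (j <= i)%N) Ai i)%VS.

Lemma irrelevant_idealE : irrelevant_ideal n Ai = graded_tail 1.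
Proof. by rewrite /irrelevant_ideal big_geq_mkord. Qed.

Lemma graded_tail_overflow : graded_tail n.+1 = 0%VS.
Proof. by rewrite /graded_tail big_pred0 // => i; rewrite leqNgt ltn_ord. Qed.

Hypothesis graded : graded_algebra n Ai.

Lemma graded_tail_mul i j u v :
  u \in graded_tail i -> v \in graded_tail j -> u * v \in graded_tail (i + j).
Proof.
have [_ _ Ai_overflow _ AiM] := graded.
case/memv_sumP=> us Hus ->; case/memv_sumP=> vs Hvs ->.
rewrite mulr_suml; apply: memv_suml => l Hl.
rewrite mulr_sumr; apply: memv_suml => l' Hl'.
have := AiM _ _ _ _ (Hus l Hl) (Hvs l' Hl').
case: (ltnP (l + l') n.+1) => [lt_ll'n | le_nll'].
  by apply: (subvP (sumv_sup (Ordinal lt_ll'n) _ (subvv _))); rewrite /= leq_add.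
by rewrite Ai_overflow // memv0 => /eqP ->; rewrite mem0v.
Qed.

Lemma graded_tail1_nilpotent m : m \in graded_tail 1 -> m ^+ n.+1 = 0.
Proof.
move=> m1; have mX j : m ^+ j.+1 \in graded_tail j.+1.
  by elim: j => [|j IHj]; rewrite ?expr1 // exprS (graded_tail_mul m1 IHj).
by apply/eqP; rewrite -memv0 -graded_tail_overflow; apply: mX.
Qed.

Lemma graded_component1_direct : (Ai 1 :&: (<[1]> + graded_tail 2) = 0)%VS.
Proof.
have [_ Ai_direct Ai_overflow Ai0_1 _] := graded.
have [n0 | n_gt0] := posnP n; first by rewrite Ai_overflow ?n0 // cap0v.
have := directv_sumP Ai_direct (Ordinal (n_gt0 : (1 < n.+1)%N)) isT.
move=> dir1; apply/eqP; rewrite -subv0 -dir1 capvS // subv_add.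
apply/andP; split.
  by rewrite -memvE; apply: (subvP (sumv_sup ord0 _ (subvv _))).
by apply/subv_sumP => -[[|[|j]] lt_jn] //= _; apply: (sumv_sup (Ordinal lt_jn)).
Qed.

End GradedAlgebra.

Section StandardGradedAlgebra.
Variables (k : fieldType) (A : falgType k) (n : nat) (Ai : nat -> {vspace A}).
Hypothesis std : standard_graded n Ai.

Lemma standard_graded_linv b : b \notin graded_tail n Ai 1 -> exists d, d * b = 1.
Proof.
have [graded maxM _] := std; rewrite irrelevant_idealE in maxM.
apply: linv_notin_maximal_ideal maxM _ => m /(graded_tail1_nilpotent graded).
exact: linv_1_sub_nilpotent.
Qed.

Lemma standard_graded_dim1_pia : (\dim (Ai 1) <= 1)%N -> principal_ideal_algebra A.
Proof.
have [graded _ M_gen] := std; have [_ _ Ai_overflow Ai0_1 AiM] := graded.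
move=> dimA1 I idI; set x := vpick (Ai 1).
have A1x : Ai 1 = <[x]>%VS.
  apply/eqP; rewrite eq_sym eqEdim -memvE memv_pick /= dim_vline.
  by case: (eqVneq x 0) => [/eqP | //]; rewrite vpick0 => /eqP ->; rewrite dimv0.
have memM a : a \in graded_tail n Ai 1 -> exists a', a = a' * x.
  rewrite -irrelevant_idealE M_gen A1x -limg_amulr => /memv_imgP[a' _ ->].
  by exists a'; rewrite lfunE.
have xX j : x ^+ j \in Ai j.
  by elim: j => [|j IHj]; rewrite ?expr0 // exprS (AiM 1%N j) ?memv_pick.
have Ix : exists j, x ^+ j \in I.
  by exists n.+1; move: (xX n.+1); rewrite Ai_overflow // memv0 => /eqP ->; rewrite mem0v.
case: (ex_minnP Ix) => j0 Ixj0 minj0; exists (x ^+ j0) => y.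
split; last by case=> a ->; apply: idI Ixj0.
(* Divide y by x while the cofactor lies in M = A x; a cofactor outside M is
   invertible and would put some x ^+ j with j < j0 into I. *)
move=> Iy; suff yX j : (j <= j0)%N -> exists a, y = a * x ^+ j by apply: yX.
elim: j => [|j IHj] le_jj0; first by exists y; rewrite mulr1.
have [a ya] := IHj (ltnW le_jj0).
have [Ma | nMa] := boolP (a \in graded_tail n Ai 1).
  by have [a' Ea] := memM a Ma; exists a'; rewrite ya Ea -mulrA -exprS.
have [d da] := standard_graded_linv nMa.
have : x ^+ j \in I by rewrite -[x ^+ j]mul1r -da -mulrA -ya idI.
by move/minj0; rewrite leqNgt le_jj0.
Qed.

End StandardGradedAlgebra.

Section Eigenvector.
Import passmx.

Lemma lfun_eigenvector (k : closedFieldType) (vT : vectType k) (phi : 'End(vT)) :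
  (0 < dim vT)%N -> exists c, exists2 v, v != 0 & phi v = c *: v.
Proof.
move=> vT_gt0; pose e := vbasis {:vT}; have e_basis : basis_of fullv e := vbasisP _.
have [c] : exists c, root (char_poly (mxof e e phi)) c.
  by apply/closed_rootP; rewrite size_char_poly dimvf; case: (dim vT) vT_gt0.
rewrite -eigenvalue_root_char => /eigenvalueP[v phiv v_neq0].
exists c, (vecof e v); first by rewrite vecof_eq0.
apply: (can_inj (rVofK e_basis)).
by rewrite -mul_mxof phiv linearZ /= vecofK.
Qed.

End Eigenvector.

Section Residue.
Variables (k : fieldType) (A : falgType k) (M : {vspace A}).
Hypotheses (idM : is_ideal M) (properM : M != fullv).
Hypothesis M_residue : forall a, exists c, a - c%:A \in M.

Lemma residue_unique a c c' : a - c%:A \in M -> a - c'%:A \in M -> c = c'.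
Proof.
move=> Mc Mc'; apply/eqP/negPn/negP => neq_cc'.
have : (c' - c)%:A \in M.
  by have := memvB Mc Mc'; rewrite opprB addrC -!addrA addKr scalerBl addrC.
move/(memvZ (c' - c)^-1); rewrite scalerA mulVf ?subr_eq0 1?eq_sym // scale1r.
by apply/negP; apply: one_notin_proper_ideal.
Qed.

Definition residue a := xchoose (M_residue a).

Lemma residueP a : a - (residue a)%:A \in M.
Proof. exact: (xchooseP (M_residue a)). Qed.

Lemma residue_linear : linear_for *%R residue.
Proof.
move=> r a b /=; apply: (residue_unique (residueP (r *: a + b))).
suff -> : r *: a + b - (r * residue a + residue b)%:A =
          r *: (a - (residue a)%:A) + (b - (residue b)%:A) by rewrite memvD ?memvZ ?residueP.
by rewrite scalerDl -scalerA scalerBr opprD addrACA.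
Qed.

Lemma residue1 : residue 1 = 1.
Proof. by apply: (residue_unique (residueP 1)); rewrite scale1r subrr mem0v. Qed.

Hypothesis Acomm : forall x y : A, x * y = y * x.

Lemma residueM a b : residue (a * b) = residue a * residue b.
Proof.
apply: (residue_unique (residueP (a * b))).
have -> : a * b - (residue a * residue b)%:A =
          b * (a - (residue a)%:A) + residue a *: (b - (residue b)%:A).
  by rewrite [b * _]Acomm mulrBl mulr_algl scalerBr scalerA addrA subrK.
by rewrite memvD ?memvZ ?idM ?residueP.
Qed.

End Residue.

Lemma standard_graded_residue (k : closedFieldType) (A : falgType k) n
    (Ai : nat -> {vspace A}) :
  standard_graded n Ai -> forall a, exists c, a - c%:A \in graded_tail n Ai 1.
Proof.
move=> std a; have [c [v v_neq0]] := lfun_eigenvector (amull a) (FalgType_proper A).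
rewrite lfunE /= => av; exists c; apply/negPn/negP => /(standard_graded_linv std)[d da].
move/eqP: v_neq0; apply; rewrite -[v]mul1r -da -mulrA mulrBl.
by rewrite av mulr_algl subrr mulr0.
Qed.

Section Degree1Derivation.
Variables (k : fieldType) (A : falgType k) (n : nat) (Ai : nat -> {vspace A}).
Hypothesis graded : graded_algebra n Ai.
Variable chi : A -> k.
Hypothesis chiP : forall a, a - (chi a)%:A \in graded_tail n Ai 1.

Definition degree1_proj := daddv_pi (Ai 1) (<[1]> + graded_tail n Ai 2).

Lemma degree1_proj_id x : x \in Ai 1 -> degree1_proj x = x.
Proof. exact: daddv_pi_id (graded_component1_direct graded). Qed.

Lemma degree1_proj_eq0 v : v \in (<[1]> + graded_tail n Ai 2)%VS -> degree1_proj v = 0.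
Proof.
move=> Vv; have dir := graded_component1_direct graded.
have dir' : ((<[1]> + graded_tail n Ai 2) :&: Ai 1 = 0)%VS by rewrite capvC.
have := daddv_pi_add dir (subvP (addvSr (Ai 1) _) v Vv).
by rewrite (daddv_pi_id dir' Vv) => /(canRL (addrK _)); rewrite subrr.
Qed.

Lemma degree1_proj_leibniz a b :
  degree1_proj (a * b) = chi a *: degree1_proj b + chi b *: degree1_proj a.
Proof.
have p1 : degree1_proj 1 = 0.
  by apply: degree1_proj_eq0; rewrite (subvP (addvSl _ _)) ?memv_line.
have pC c x : degree1_proj (x - c%:A) = degree1_proj x.
  by rewrite linearB linearZ /= p1 scaler0 subr0.
(* (ma + ca)(mb + cb) - ca mb - cb ma = ma mb + ca cb lies in A_{>=2} + k. *)
have p_shiftM ma mb ca cb : ma \in graded_tail n Ai 1 -> mb \in graded_tail n Ai 1 ->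
    degree1_proj ((ma + ca%:A) * (mb + cb%:A)) = ca *: degree1_proj mb + cb *: degree1_proj ma.
  move=> ma1 mb1; have pM0 : degree1_proj (ma * mb) = 0.
    by rewrite degree1_proj_eq0 // (subvP (addvSr _ _)) // (graded_tail_mul graded ma1 mb1).
  rewrite mulrDl !mulrDr mulr_algr !mulr_algl !linearD !linearZ /= linearZ /=.
  by rewrite p1 pM0 !scaler0 add0r addr0 addrC.
by have := p_shiftM _ _ (chi a) (chi b) (chiP a) (chiP b); rewrite !subrK !pC.
Qed.

End Degree1Derivation.

Section TruncatedPolynomials.
Variable k : fieldType.

Lemma trunc_mul_row N (g h : nat -> k) :
  trunc_mul (\row_(i < N.+1) g i) (\row_(i < N.+1) h i) =
  \row_(i < N.+1) \sum_(l < i.+1) g l * h (i - l)%N.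
Proof.
apply/rowP => i; rewrite !mxE coefM; apply: eq_bigr => l _.
have lN : (l < N.+1)%N by apply: leq_ltn_trans (ltn_ord i); rewrite -ltnS.
have ilN : (i - l < N.+1)%N by apply: leq_ltn_trans (ltn_ord i); rewrite leq_subr.
by rewrite /trunc_poly !coef_poly lN ilN !mxE !inordK.
Qed.

Lemma two_le_dimv_row m (V : {vspace 'rV[k]_m}) (u v : 'rV[k]_m) (i j : 'I_m) :
  u \in V -> v \in V -> u 0 i = 1 -> v 0 i = 0 -> v 0 j = 1 -> (2 <= \dim V)%N.
Proof.
move=> Vu Vv ui vi vj.
have uv_free : free [:: u; v].
  rewrite free_cons seq1_free span_seq1; apply/andP; split.
    apply/vlineP => -[c uc]; move/eqP: ui; rewrite uc mxE vi mulr0 eq_sym.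
    by rewrite oner_eq0.
  by apply/eqP => v0; move/eqP: vj; rewrite v0 mxE eq_sym oner_eq0.
have : (<<[:: u; v]>> <= V)%VS.
  by apply/span_subvP => w; rewrite !inE => /orP[] /eqP ->.
by move/dimvS; rewrite (eqP uv_free).
Qed.

Variable A : falgType k.

Lemma linfun_of_linear m (F : A -> 'rV[k]_m) :
  linear F -> exists alpha : 'Hom(A, 'rV[k]_m), alpha =1 F.
Proof.
move=> linF; pose L : {linear A -> 'rV[k]_m} := HB.pack F (GRing.isLinear.Build _ _ _ _ F linF).
by exists (linfun L) => a; rewrite lfunE.
Qed.

Lemma trunc_alg_hom_derivations (chi D1 D2 : A -> k) :
  linear_for *%R chi -> linear_for *%R D1 -> linear_for *%R D2 ->
  chi 1 = 1 -> (forall a b, chi (a * b) = chi a * chi b) ->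
  (forall a b, D1 (a * b) = chi a * D1 b + chi b * D1 a) ->
  (forall a b, D2 (a * b) = chi a * D2 b + chi b * D2 a) ->
  exists alpha : 'Hom(A, 'rV[k]_4), trunc_alg_hom alpha /\
    alpha =1 fun a => \row_(i < 4) [:: chi a; 0; D1 a; D2 a]`_i.
Proof.
move=> chiL D1L D2L chi1 chiM D1M D2M.
have [alpha alphaE] : exists alpha : 'Hom(A, 'rV[k]_4),
    alpha =1 fun a => \row_(i < 4) [:: chi a; 0; D1 a; D2 a]`_i.
  apply: linfun_of_linear => r a b; apply/rowP => i; rewrite !mxE.
  by case: i => -[|[|[|[|i]]]] //= _; rewrite ?chiL ?D1L ?D2L ?mulr0 ?addr0.
have der1 D : (forall a b, D (a * b) = chi a * D b + chi b * D a) -> D 1 = 0.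
  by move=> DM; have := DM 1 1; rewrite mul1r chi1 !mul1r => /esym/(canRL (addrK _)); rewrite subrr.
exists alpha; split=> //; split=> [|a b]; rewrite !alphaE.
  apply/rowP => i; rewrite !mxE.
  by case: i => -[|[|[|[|i]]]] //= _; rewrite ?chi1 ?der1.
(* The row is chi a + D1 a t^2 + D2 a t^3; mod t^4 no product of two
   derivation terms survives. *)
rewrite trunc_mul_row; apply/rowP => i; rewrite !mxE.
case: i => -[|[|[|[|i]]]] //= _; rewrite !big_ord_recr big_ord0 /= ?mulr0 ?mul0r.
- by rewrite chiM add0r.
- by rewrite !addr0.
- by rewrite D1M !addr0 add0r [D1 a * _]mulrC.
- by rewrite D2M !addr0 add0r [D2 a * _]mulrC.
Qed.

End TruncatedPolynomials.

Lemma standard_graded_E_set1 (k : closedFieldType) (A : falgType k)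
    (Acomm : forall x y : A, x * y = y * x) n (Ai : nat -> {vspace A}) :
  standard_graded n Ai -> (2 <= \dim (Ai 1))%N -> E_set Ai 1.
Proof.
move=> std dimA1; have [graded [idM properM _] _] := std.
rewrite irrelevant_idealE in idM properM.
have M_residue := standard_graded_residue std.
pose chi := residue M_residue; have chiP : forall a, _ := residueP M_residue.
pose X := vbasis (Ai 1); pose D i a := coord X i (degree1_proj n Ai a).
have DL i : linear_for *%R (D i) by move=> r a b; rewrite /D !linearP.
have DM i a b : D i (a * b) = chi a * D i b + chi b * D i a.
  by rewrite /D (degree1_proj_leibniz graded chiP) linearD !linearZ.
pose i0 : 'I_(\dim (Ai 1)) := Ordinal (ltnW dimA1); pose i1 := Ordinal dimA1.
have [alpha [hom alphaE]] := trunc_alg_hom_derivations (residue_linear idM properM M_residue)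
  (DL i0) (DL i1) (residue1 idM properM M_residue) (residueM idM properM M_residue Acomm) (DM i0) (DM i1).
exists 3, alpha; split=> //.
have A1X (i : 'I_(\dim (Ai 1))) : X`_i \in Ai 1.
  by apply: vbasis_mem; apply: mem_nth; rewrite size_tuple.
have DX i (j : 'I_(\dim (Ai 1))) : D i X`_j = (j == i)%:R.
  by rewrite /D degree1_proj_id ?A1X // coord_free //; apply: basis_free (vbasisP _).
apply: (two_le_dimv_row (i := inord 2) (j := inord 3)
  (memv_img alpha (A1X i0)) (memv_img alpha (A1X i1))).
all: by rewrite alphaE mxE !DX inordK //= ?eqxx.
Qed.

Lemma E_set_le (k : fieldType) (A : falgType k) n (Ai : nat -> {vspace A}) i :
  graded_algebra n Ai -> E_set Ai i -> (i <= n)%N.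
Proof.
move=> [_ _ Ai_overflow _ _] [N [alpha [_ dim_img]]].
by rewrite leqNgt; apply: contraTN dim_img => /Ai_overflow ->; rewrite limg0 dimv0.
Qed.

Theorem lemma2p3 (k : closedFieldType) (chark0 : [pchar k] =i pred0)
    (A : falgType k) (Acomm : forall x y : A, x * y = y * x)
    (n : nat) (Ai : nat -> {vspace A})
    (Hstd : standard_graded n Ai)
    (HnotPIA : ~ principal_ideal_algebra A) :
  (exists i : nat, E_set Ai i) /\
  (exists B : nat, forall i : nat, E_set Ai i -> (i <= B)%N).
Proof.
split; last by exists n => i; apply: E_set_le; case: Hstd.
exists 1%N; apply: (standard_graded_E_set1 Acomm Hstd).
rewrite ltnNge; apply/negP => dimA1_le1.
exact/HnotPIA/(standard_graded_dim1_pia Hstd dimA1_le1).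
Qed.
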